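(* Let $X\subseteq\mathbb{R}^m$, $f:X\to\mathbb{R}^d$ with $a_{i0}\le f_i(x)\le a_{in}$ on $X$, and $\theta=(\theta_1,\dots,\theta_\kappa):\mathbb{R}^d\to\mathbb{R}^\kappa$ a vector of multilinear functions $\theta_k(s_{1n},\dots,s_{dn})=\sum_{I\in\mathcal{I}_k}c^k_I\prod_{i\in I}s_{in}$. Let $u:X\to\mathbb{R}^{d\times(n+1)}$ be convex with $u_{i0}(x)=a_{i0}$, $u_{in}(x)=f_i(x)$, $u_{ij}(x)\le\min\{f_i(x),a_{ij}\}$ ($j\in[n-1]$), and $W$ a convex set containing $\{(x,f(x))\mid x\in X\}$. Then, identifying $f$ with $s_{\cdot n}=(s_{1n},\dots,s_{dn})$, the set $\{(\vartheta,w,s,\delta)\mid(\vartheta,w,s)\text{ satisfies (HQ)},\ (Z(s),\delta)\text{ satisfies (Inc-1)}\}$ is an ideal formulation of $\bigcup_{H\in\mathcal{H}}\operatorname{conv}\bigl(\{(f,\theta(f))\mid f\in H\}\bigr)$, and adding $u(x)\le s$ and $(x,s_{\cdot n})\in W$ yields an MICP relaxation of the graph of $\theta\circ f$.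
   Context: $d,n,\kappa\ge1$, $[k]=\{1,\dots,k\}$, $E=\{0,\dots,n\}^d$; each $\mathcal{I}_k$ is a collection of subsets of $[d]$, $c^k_I\in\mathbb{R}$. $a\in\mathbb{R}^{d\times(n+1)}$ with $a_{i0}<\dots<a_{in}$; integers $0=\tau(i,0)<\dots<\tau(i,l_i)=n$; $\mathcal{H}=\{\prod_i[a_{i\tau(i,t_i-1)},a_{i\tau(i,t_i)}]\mid t_i\in[l_i]\}$. $\Delta_i=\{z_i\in\mathbb{R}^{n+1}\mid1=z_{i0}\ge\dots\ge z_{in}\ge0\}$. (Inc-1): $z_i\in\Delta_i$, $\delta_{it}\in\{0,1\}$, $z_{i\tau(i,t)}\ge\delta_{it}\ge z_{i\tau(i,t)+1}$ ($i\in[d]$, $t\in[l_i-1]$). $Z(s)_{i0}=1$, $Z(s)_{ij}=(s_{ij}-s_{i,j-1})/(a_{ij}-a_{i,j-1})$. $v_{ij}\in\mathbb{R}^{n+1}$ has $k$-th component $a_{i,\min\{k,j\}}$. System (HQ) in $(\vartheta,w,s)$, $w=(w_p)_{p\in E}$: $\vartheta_k=\sum_{I\in\mathcal{I}_k}c^k_I\sum_{p\in E}(\prod_{i\in I}a_{ip_i})w_p$ for $k\in[\kappa]$; $w\ge0$, $\sum_{p\in E}w_p=1$; $s_i=\sum_{j=0}^nv_{ij}\sum_{p\in E:p_i=j}w_p$ for $i\in[d]$. Ideal formulation: projection onto $(f,\vartheta)$ equals the target set and every extreme point of the continuous relaxation has binary $\delta$. MICP relaxation of the graph: its projection onto $(x,\vartheta)$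 contains $\{(x,\theta(f(x)))\mid x\in X\}$ and its continuous relaxation is convex. *)

From HB Require Import structures.
From mathcomp Require Import all_boot all_order all_algebra.
From mathcomp Require Import reals.
Set Implicit Arguments. Unset Strict Implicit. Unset Printing Implicit Defensive.
Import Order.TTheory GRing.Theory Num.Theory.
Local Open Scope ring_scope.

Definition cvx_set (R : numDomainType) (V : lmodType R) (C : V -> Prop) :=
  forall p q (t : R), C p -> C q -> 0 <= t <= 1 -> C (t *: p + (1 - t) *: q).

Definition convex_fun_on (R : numDomainType) (V : lmodType R) (D : V -> Prop)
    (g : V -> R) :=
  forall x y (t : R), D x -> D y -> 0 <= t <= 1 ->
    g (t *: x + (1 - t) *: y) <= t * g x + (1 - t) * g y.

Definition conv_hull (R : numDomainType) (V : lmodType R) (A : V -> Prop) (x : V) :=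
  exists (k : nat) (lam : 'I_k -> R) (p : 'I_k -> V),
    (forall i, 0 <= lam i) /\ \sum_(i < k) lam i = 1 /\
    (forall i, A (p i)) /\ x = \sum_(i < k) lam i *: p i.

Definition extreme_point (R : numDomainType) (V : lmodType R) (C : V -> Prop) (p : V) :=
  C p /\ forall q r (t : R), C q -> C r -> 0 < t < 1 ->
    p = t *: q + (1 - t) *: r -> q = r.

Definition ideal_formulation (R : numDomainType) (V U : lmodType R)
    (S Srelax : V -> Prop) (proj : V -> U) (Tset : U -> Prop) (isbin : V -> Prop) :=
  (forall y, (exists p, S p /\ proj p = y) <-> Tset y) /\
  (forall p, extreme_point Srelax p -> isbin p).

Definition micp_relaxation (R : numDomainType) (V U : lmodType R)
    (M Mrelax : V -> Prop) (proj : V -> U) (G : U -> Prop) :=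
  (forall y, G y -> exists p, M p /\ proj p = y) /\ cvx_set Mrelax.

Definition bin01 (R : numDomainType) (r : R) := r = 0 \/ r = 1.
Definition rel01 (R : numDomainType) (r : R) := 0 <= r <= 1.

(* Indices: i in [d] is 'I_d (0-based); j in {0..n} is 'I_n.+1 or a nat <= n.
   a is the d x (n+1) matrix of breakpoints, accessed at nat indices by aa. *)

Definition aa (R : numDomainType) (d n : nat) (a : 'M[R]_(d, n.+1)) (i : 'I_d) (j : nat) : R :=
  a i (inord j).

Notation grid d n := {ffun 'I_d -> 'I_n.+1}.

(* index set of delta: pairs (i, t) with t in [l_i - 1]; t is encoded as k+1, k : 'I_(l_i - 1) *)
Notation didx l := {i : 'I_ _ & 'I_(l i).-1}.

Definition theta (R : numDomainType) (d kap : nat) (II : 'I_kap -> {set {set 'I_d}})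
    (c : 'I_kap -> {set 'I_d} -> R) (g : 'rV[R]_d) : 'rV[R]_kap :=
  \row_k \sum_(I in II k) c k I * \prod_(i in I) g 0 i.

Definition HQ (R : numDomainType) (d n kap : nat) (a : 'M[R]_(d, n.+1))
    (II : 'I_kap -> {set {set 'I_d}}) (c : 'I_kap -> {set 'I_d} -> R)
    (th : 'rV[R]_kap) (w : {ffun grid d n -> R^o}) (s : 'M[R]_(d, n.+1)) : Prop :=
  (forall k, th 0 k = \sum_(I in II k) c k I *
                         \sum_(p : grid d n) (\prod_(i in I) a i (p i)) * w p) /\
  (forall p, 0 <= w p) /\ \sum_(p : grid d n) w p = 1 /\
  (forall i (k : 'I_n.+1),
     s i k = \sum_(j < n.+1) aa a i (minn k j) * \sum_(p : grid d n | p i == j) w p).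

(* Z(s), as a function of i and a nat index j (meaningful for j <= n) *)
Definition Zmap (R : numFieldType) (d n : nat) (a s : 'M[R]_(d, n.+1)) (i : 'I_d) (j : nat) : R :=
  if j == 0%N then 1
  else (aa s i j - aa s i j.-1) / (aa a i j - aa a i j.-1).

(* (Inc-1) without the integrality condition on delta *)
Definition Inc1_lin (R : numDomainType) (d n : nat) (l : 'I_d -> nat)
    (tau : 'I_d -> nat -> nat) (z : 'I_d -> nat -> R) (dl : {ffun didx l -> R^o}) : Prop :=
  (forall i, z i 0%N = 1 /\ (forall j, (j < n)%N -> z i j.+1 <= z i j) /\ 0 <= z i n) /\
  (forall k : didx l,
     z (tag k) (tau (tag k) (tagged k).+1).+1 <= dl k <= z (tag k) (tau (tag k) (tagged k).+1)).

Notation PT R d n kap l :=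
  ('rV[R]_kap * {ffun grid d n -> R^o} * 'M[R]_(d, n.+1) * {ffun didx l -> R^o})%type.

(* the set {(vartheta,w,s,delta) | HQ, (Z(s),delta) in Inc-1}, with the condition dc
   imposed on each delta: dc = bin01 gives the set itself, dc = rel01 its
   continuous relaxation *)
Definition Sset (R : numFieldType) (d n kap : nat) (a : 'M[R]_(d, n.+1))
    (l : 'I_d -> nat) (tau : 'I_d -> nat -> nat)
    (II : 'I_kap -> {set {set 'I_d}}) (c : 'I_kap -> {set 'I_d} -> R)
    (dc : R -> Prop) (p : PT R d n kap l) : Prop :=
  let: (th, w, s, dl) := p in
  HQ a II c th w s /\ Inc1_lin n tau (Zmap a s) dl /\ forall k, dc (dl k).

Definition lastcol (R : numDomainType) (d n : nat) (s : 'M[R]_(d, n.+1)) : 'rV[R]_d :=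
  \row_i s i ord_max.

Definition proj_fth (R : numDomainType) (d n kap : nat) (l : 'I_d -> nat)
    (p : PT R d n kap l) : 'rV[R]_d * 'rV[R]_kap :=
  let: (th, w, s, dl) := p in (lastcol s, th).

Definition delta_binary (R : numDomainType) (d n kap : nat) (l : 'I_d -> nat)
    (p : PT R d n kap l) : Prop := forall k, bin01 (p.2 k).

(* the box of H indexed by t, t_i in [l_i] *)
Definition box (R : numDomainType) (d n : nat) (a : 'M[R]_(d, n.+1))
    (tau : 'I_d -> nat -> nat) (t : 'I_d -> nat) (g : 'rV[R]_d) : Prop :=
  forall i, aa a i (tau i (t i).-1) <= g 0 i <= aa a i (tau i (t i)).

Definition target (R : numDomainType) (d n kap : nat) (a : 'M[R]_(d, n.+1))
    (l : 'I_d -> nat) (tau : 'I_d -> nat -> nat)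
    (II : 'I_kap -> {set {set 'I_d}}) (c : 'I_kap -> {set 'I_d} -> R)
    (y : 'rV[R]_d * 'rV[R]_kap) : Prop :=
  exists t : 'I_d -> nat, (forall i, 0 < t i <= l i)%N /\
    conv_hull (fun y' => exists g, box a tau t g /\ y' = (g, theta II c g)) y.

Definition Mset (R : numFieldType) (m d n kap : nat) (a : 'M[R]_(d, n.+1))
    (l : 'I_d -> nat) (tau : 'I_d -> nat -> nat)
    (II : 'I_kap -> {set {set 'I_d}}) (c : 'I_kap -> {set 'I_d} -> R)
    (X : 'rV[R]_m -> Prop) (u : 'rV[R]_m -> 'M[R]_(d, n.+1))
    (W : 'rV[R]_m * 'rV[R]_d -> Prop)
    (dc : R -> Prop) (q : 'rV[R]_m * PT R d n kap l) : Prop :=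
  let: (x, p) := q in
  X x /\ Sset a tau II c dc p /\ (forall i j, u x i j <= (p.1.2 : 'M[R]_(d, n.+1)) i j) /\
  W (x, lastcol p.1.2).

Definition proj_xth (R : numDomainType) (m d n kap : nat) (l : 'I_d -> nat)
    (q : 'rV[R]_m * PT R d n kap l) : 'rV[R]_m * 'rV[R]_kap :=
  (q.1, q.2.1.1.1).

Definition graph_thf (R : numDomainType) (m d kap : nat)
    (II : 'I_kap -> {set {set 'I_d}}) (c : 'I_kap -> {set 'I_d} -> R)
    (X : 'rV[R]_m -> Prop) (f : 'rV[R]_m -> 'rV[R]_d) (y : 'rV[R]_m * 'rV[R]_kap) : Prop :=
  X y.1 /\ y.2 = theta II c (f y.1).

From HB Require Import structures.
From mathcomp Require Import all_boot all_order all_algebra.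
From mathcomp Require Import reals ring lra zify.
Import Order.TTheory GRing.Theory Num.Theory.
Local Open Scope ring_scope.
Set Implicit Arguments. Unset Strict Implicit. Unset Printing Implicit Defensive.

(* (HQ) says that (vartheta, s) is the w-average of the vertex data (theta(a_p), s_p) for a
   probability w on the grid E, and then Z(s)_ij is the tail mass w(p_i >= j); so (Inc-1)
   pins delta_(i,t) between the tails at tau(i,t) + 1 and tau(i,t).
   A binary delta confines w to a single box of H, which makes (f, vartheta) a convex
   combination of points (g, theta(g)) with g in that box; conversely such a combination is
   realised by mixing product distributions, each supported on the two ends of the coordinate
   intervals of the box, because theta is multilinear.
   At an extreme point of the relaxation w is a point mass (otherwise split off an atom,
   carrying delta along with its relative position in the tail intervals) and every delta_k
   is an end of its interval (otherwise move it); the tails of a point mass are 0 or 1.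
   For the MICP part, x is lifted by the product of the two-point distributions on the
   breakpoints a_ik <= f_i(x) <= a_i(k+1), whose s dominates min(f_i(x), a_ij) >= u_ij(x). *)

Lemma regular_scaleE (R : pzRingType) (x y : R) : x *: (y : R^o) = x * y.
Proof. by []. Qed.

(** * Expectations and distributions on a finite type *)

Section Expectation.
Variables (R : pzRingType) (T : finType).

Definition expect (V : lmodType R) (v : T -> V) (w : {ffun T -> R^o}) : V :=
  \sum_p (w p : R) *: v p.

Lemma expect_is_linear (V : lmodType R) (v : T -> V) : linear (expect v).
Proof.
move=> r w1 w2; rewrite /expect scaler_sumr -big_split; apply: eq_bigr => p _.
by rewrite !ffunE scalerDl scalerA.
Qed.

HB.instance Definition _ (V : lmodType R) (v : T -> V) :=
  GRing.isLinear.Build R {ffun T -> R^o} V _ (expect v) (expect_is_linear v).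

Lemma convex_combxx (V : lmodType R) (t : R) (x : V) : t *: x + (1 - t) *: x = x.
Proof. by rewrite -scalerDl addrC subrK scale1r. Qed.

Definition dirac (p0 : T) : {ffun T -> R^o} := [ffun p => (p == p0)%:R].

Lemma expect_dirac (V : lmodType R) (v : T -> V) p0 : expect v (dirac p0) = v p0.
Proof.
rewrite /expect (bigD1 p0) //= big1 => [|p /negbTE p_neq0]; rewrite ffunE.
  by rewrite eqxx scale1r addr0.
by rewrite p_neq0 scale0r.
Qed.

Lemma expect_const1 (w : {ffun T -> R^o}) : expect (fun=> 1 : R^o) w = \sum_p w p.
Proof. by apply: eq_bigr => p _; rewrite [LHS]mulr1. Qed.

Lemma expect_pair (V1 V2 : lmodType R) (v : T -> V1 * V2) w :
  expect v w = (expect (fst \o v) w, expect (snd \o v) w).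
Proof.
by rewrite [LHS]surjective_pairing /expect; congr (_, _); rewrite raddf_sum.
Qed.

Lemma expect_mxE m k (v : T -> 'M[R]_(m, k)) w i j :
  expect v w i j = \sum_p (w p : R) * v p i j.
Proof. by rewrite /expect summxE; apply: eq_bigr => p _; rewrite mxE. Qed.

Lemma eq_expect_supp (V : lmodType R) (v1 v2 : T -> V) (w : {ffun T -> R^o}) :
  (forall p, w p != 0 -> v1 p = v2 p) -> expect v1 w = expect v2 w.
Proof.
move=> eq_v; apply: eq_bigr => p _.
by have [->|/eq_v->] := eqVneq (w p) 0; rewrite ?scale0r.
Qed.

End Expectation.

Section Distributions.
Variables (R : realFieldType) (T : finType).
Implicit Types w : {ffun T -> R^o}.

Definition distr w := (forall p, 0 <= w p) /\ \sum_p w p = 1.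

Lemma ler_expect (v1 v2 : T -> R^o) w :
  (forall p, 0 <= w p) -> (forall p, v1 p <= v2 p :> R) ->
  expect v1 w <= expect v2 w :> R.
Proof. by move=> w_ge0 le_v; apply: ler_sum => p _; apply: ler_wpM2l. Qed.

Lemma expect_le0_supp (v : T -> R^o) w p :
  (forall q, 0 <= w q) -> (forall q, 0 <= v q :> R) -> expect v w <= 0 :> R ->
  w p != 0 -> v p = 0.
Proof.
move=> w_ge0 v_ge0 Ev_le0 w_p; have wv_ge0 q : 0 <= w q * v q := mulr_ge0 (w_ge0 q) (v_ge0 q).
have Ev0 : \sum_q w q * v q = 0 :> R by apply/le_anti; rewrite Ev_le0 sumr_ge0.
have /eqP := psumr_eq0P (fun q _ => wv_ge0 q) Ev0 (i := p) isT.
by rewrite mulf_eq0 (negbTE w_p) => /eqP.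
Qed.

Lemma distr_dirac p0 : distr (dirac R p0).
Proof.
split=> [p|]; first by rewrite ffunE ler0n.
by rewrite -expect_const1 expect_dirac.
Qed.

Lemma distr_comb t w1 w2 :
  0 <= t <= 1 -> distr w1 -> distr w2 -> distr (t *: w1 + (1 - t) *: w2).
Proof.
move=> /andP[t_ge0 t_le1] [w1_ge0 sum_w1] [w2_ge0 sum_w2]; split=> [p|].
  by rewrite !ffunE addr_ge0 // mulr_ge0 // subr_ge0.
rewrite -expect_const1 linearD !linearZ /= !expect_const1 sum_w1 sum_w2.
by rewrite convex_combxx.
Qed.

Lemma distr_mix k (lam : 'I_k -> R) (W : 'I_k -> {ffun T -> R^o}) :
  (forall j, 0 <= lam j) -> \sum_j lam j = 1 -> (forall j, distr (W j)) ->
  distr (\sum_j lam j *: W j).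
Proof.
move=> lam_ge0 sum_lam W_distr; split=> [p|].
  by rewrite sum_ffunE sumr_ge0 // => j _; rewrite ffunE mulr_ge0 // (W_distr j).1.
rewrite -expect_const1 linear_sum -[RHS]sum_lam; apply: eq_bigr => j _.
by rewrite linearZ /= expect_const1 (W_distr j).2 regular_scaleE mulr1.
Qed.

Lemma mix_supp k (lam : 'I_k -> R) (W : 'I_k -> {ffun T -> R^o}) p :
  (\sum_j lam j *: W j) p != 0 -> exists j, W j p != 0.
Proof.
move=> mix_p; apply/existsP; apply: contraNT mix_p => /existsPn W_p0.
by rewrite sum_ffunE big1 // => j _; rewrite ffunE (eqP (negPn (W_p0 j))) scaler0.
Qed.

Lemma distr_supp w : distr w -> exists p, w p != 0.
Proof.
move=> [_ sum_w]; have [/existsP //|/existsPn w0] := boolP [exists p, w p != 0].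
move: sum_w; rewrite big1 => [/eqP|p _]; first by rewrite eq_sym oner_eq0.
by apply/eqP; rewrite -[_ == _]negbK w0.
Qed.

Lemma expect_conv_hull (V : lmodType R) (A : V -> Prop) (v : T -> V) w :
  distr w -> (forall p, w p != 0 -> A (v p)) -> conv_hull A (expect v w).
Proof.
move=> w_distr Av; have [p1 w_p1] := distr_supp w_distr; have [w_ge0 sum_w] := w_distr.
pose v' p := if w p == 0 then v p1 else v p.
exists #|T|, (fun j => w (enum_val j)), (fun j => v' (enum_val j)).
split=> [//|]; split.
  by rewrite -sum_w (big_enum_val (A := T)).
split=> [j|]; first by rewrite /v'; case: eqP => [_|/eqP]; apply: Av.
rewrite (eq_expect_supp (v2 := v')) => [|p /negbTE w_p]; last by rewrite /v' w_p.
by rewrite /expect (big_enum_val (A := T)).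
Qed.

Lemma distr_dirac_or_mixed w :
  distr w -> (exists p0, w = dirac R p0) \/ (exists p0, 0 < w p0 < 1).
Proof.
move=> w_distr; have [p0 w_p0] := distr_supp w_distr; have [w_ge0 sum_w] := w_distr.
have [w_p0_lt1|w_p0_ge1] := ltP (w p0) 1.
  by right; exists p0; rewrite lt_def w_p0 w_p0_lt1 w_ge0.
left; exists p0.
have w_p0_le1 : w p0 <= 1.
  by rewrite -sum_w (bigD1 p0) //= lerDl sumr_ge0.
have w_p0_1 : w p0 = 1 by apply/eqP; rewrite eq_le w_p0_le1 w_p0_ge1.
have rest0 : \sum_(p | p != p0) w p = 0.
  by move: sum_w; rewrite (bigD1 p0) //= w_p0_1; lra.
apply/ffunP => p; rewrite ffunE; have [->|p_neq] := eqVneq p p0; first by rewrite w_p0_1.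
exact: (psumr_eq0P (fun q _ => w_ge0 q) rest0).
Qed.

End Distributions.

(** * Interpolation on an interval *)

Section Interpolation.
Variable R : realFieldType.
Implicit Types x y v s : R.

Definition lerp x y s := (1 - s) * x + s * y.

Lemma lerp_comb r1 r2 x1 x2 y1 y2 s :
  lerp (r1 * x1 + r2 * x2) (r1 * y1 + r2 * y2) s = r1 * lerp x1 y1 s + r2 * lerp x2 y2 s.
Proof. by rewrite /lerp; ring. Qed.

(* [relpos x x v = 0] since [_ / 0 = 0]; [relposK] still holds because then [v = x]. *)
Definition relpos x y v := (v - x) / (y - x).

Lemma lerp_itv x y s : x <= y -> 0 <= s <= 1 -> x <= lerp x y s <= y.
Proof. by move=> le_xy /andP[s_ge0 s_le1]; rewrite /lerp; apply/andP; split; nra. Qed.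

Lemma relpos_itv x y v : x <= v <= y -> 0 <= relpos x y v <= 1.
Proof.
move=> /andP[le_xv le_vy]; have [eq_xy|lt_xy] := eqVneq x y.
  by rewrite /relpos eq_xy subrr invr0 mulr0 lexx ler01.
have xy_gt0 : 0 < y - x by rewrite subr_gt0 lt_neqAle lt_xy (le_trans le_xv).
rewrite /relpos ler_pdivrMr // mul1r lerD2r le_vy andbT.
by apply: divr_ge0; [rewrite subr_ge0 | exact: ltW].
Qed.

Lemma relpos_itv_lt x y v : x < v < y -> 0 < relpos x y v < 1.
Proof.
move=> /andP[lt_xv lt_vy]; have xy_gt0 : 0 < y - x by rewrite subr_gt0 (lt_trans lt_xv).
by rewrite /relpos ltr_pdivrMr // mul1r ltrD2r lt_vy andbT divr_gt0 // subr_gt0.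
Qed.

Lemma relposK x y v : x <= v <= y -> lerp x y (relpos x y v) = v.
Proof.
move=> /andP[le_xv le_vy]; have [eq_xy|neq_xy] := eqVneq x y.
  have eq_vx : v = x by apply/le_anti; rewrite le_xv eq_xy le_vy.
  by rewrite /lerp /relpos eq_vx eq_xy subrr mul0r subr0 mul1r mul0r addr0.
by rewrite /lerp /relpos; field; rewrite subr_eq0 eq_sym.
Qed.

End Interpolation.

Lemma nat_ivt (P : pred nat) m :
  ~~ P 0 -> P m -> exists2 k, (k < m)%N & ~~ P k && P k.+1.
Proof.
move=> nP0; elim: m => [P0|m IHm Pm1]; first by rewrite P0 in nP0.
have [Pm|nPm] := boolP (P m); last by exists m; rewrite ?nPm.
by have [k lt_km Pk] := IHm Pm; exists k => //; rewrite ltnS ltnW.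
Qed.

(** * The system (HQ) and the tail form of (Inc-1) *)

Section Formulation.
Variables (R : realFieldType) (d n kap : nat) (a : 'M[R]_(d, n.+1)).
Variables (l : 'I_d -> nat) (tau : 'I_d -> nat -> nat).
Variables (II : 'I_kap -> {set {set 'I_d}}) (c : 'I_kap -> {set 'I_d} -> R).
Hypothesis a_incr : forall i j, (j < n)%N -> aa a i j < aa a i j.+1.
Hypothesis tau_incr : forall i, tau i 0%N = 0%N /\ tau i (l i) = n /\
  forall t, (t < l i)%N -> (tau i t < tau i t.+1)%N.

Implicit Types (w : {ffun grid d n -> R^o}) (dl : {ffun didx l -> R^o}).

Lemma aa_ord (M : 'M[R]_(d, n.+1)) i (j : 'I_n.+1) : aa M i j = M i j.
Proof. by rewrite /aa inord_val. Qed.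

Lemma aa_ler i j j' : (j <= j' <= n)%N -> aa a i j <= aa a i j'.
Proof.
move=> /andP[]; elim: j' => [|j' IH]; first by rewrite leqn0 => /eqP->.
rewrite leq_eqVlt ltnS => /orP[/eqP-> //|le_jj' lt_j'n].
exact: le_trans (IH le_jj' (ltnW lt_j'n)) (ltW (a_incr i lt_j'n)).
Qed.

Lemma tau_ltn i t t' : (t < t' <= l i)%N -> (tau i t < tau i t')%N.
Proof.
have [_ [_ tau_S]] := tau_incr i.
move=> /andP[]; elim: t' => [//|t' IH].
rewrite ltnS leq_eqVlt => /orP[/eqP-> /tau_S //|lt_tt' lt_t'l].
exact: ltn_trans (IH lt_tt' (ltnW lt_t'l)) (tau_S _ lt_t'l).
Qed.

Lemma tau_leq i t t' : (t <= t' <= l i)%N -> (tau i t <= tau i t')%N.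
Proof.
move=> /andP[]; rewrite leq_eqVlt => /orP[/eqP-> //|lt_tt' le_t'l].
by apply/ltnW/tau_ltn; rewrite lt_tt'.
Qed.

Definition vertex (p : grid d n) : 'rV[R]_d := \row_i a i (p i).

Definition svertex (p : grid d n) : 'M[R]_(d, n.+1) := \matrix_(i, k) aa a i (minn k (p i)).

Definition tail i j w : R := expect (fun p : grid d n => (j <= p i)%:R : R^o) w.

Definition hq_point w dl : PT R d n kap l :=
  (expect (fun p => theta II c (vertex p)) w, w, expect svertex w, dl).

Definition brk (k : didx l) := tau (tag k) (tagged k).+1.

Definition tail_bounds w dl :=
  forall k, tail (tag k) (brk k).+1 w <= dl k <= tail (tag k) (brk k) w.

Lemma expect_theta_vertex w k :
  expect (fun p => theta II c (vertex p)) w 0 k =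
  \sum_(I in II k) c k I * \sum_(p : grid d n) (\prod_(i in I) a i (p i)) * w p.
Proof.
rewrite expect_mxE; under eq_bigr do rewrite mxE mulr_sumr.
rewrite exchange_big; apply: eq_bigr => I _; rewrite mulr_sumr; apply: eq_bigr => p _.
by under eq_bigr do rewrite mxE; rewrite mulrCA [w p * _]mulrC.
Qed.

Lemma expect_svertex w i k :
  expect svertex w i k = \sum_(j < n.+1) aa a i (minn k j) * \sum_(p : grid d n | p i == j) w p.
Proof.
rewrite expect_mxE (partition_big (fun p : grid d n => p i) xpredT) //=.
apply: eq_bigr => j _; rewrite mulr_sumr; apply: eq_bigr => p /eqP <-.
by rewrite mxE mulrC.
Qed.

Lemma HQ_expect th w s :
  HQ a II c th w s <->
  [/\ th = expect (fun p => theta II c (vertex p)) w, s = expect svertex w & distr w].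
Proof.
split=> [[th_eq [w_ge0 [sum_w s_eq]]]|[-> -> [w_ge0 sum_w]]].
  split=> //; first by apply/rowP => k; rewrite th_eq expect_theta_vertex.
  by apply/matrixP => i k; rewrite s_eq expect_svertex.
by split=> [k|]; [rewrite expect_theta_vertex | split=> //; split=> // i k; rewrite expect_svertex].
Qed.

Lemma tail_ge0 i j w : (forall p, 0 <= w p) -> 0 <= tail i j w.
Proof. by move=> w_ge0; apply: sumr_ge0 => p _; apply: mulr_ge0. Qed.

Lemma tail_antitone i j j' w :
  (forall p, 0 <= w p) -> (j <= j')%N -> tail i j' w <= tail i j w.
Proof.
move=> w_ge0 le_jj'; apply: ler_expect => // p.
by rewrite ler_nat; case: (leqP j' (p i)) => [le_j'p|]; rewrite ?(leq_trans le_jj' le_j'p).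
Qed.

Lemma tail_le1 i j w : distr w -> tail i j w <= 1.
Proof.
move=> [w_ge0 sum_w]; rewrite -sum_w -expect_const1.
by apply: ler_expect => // p; rewrite lern1 leq_b1.
Qed.

Lemma tail0 i w : distr w -> tail i 0 w = 1.
Proof. by move=> [_ sum_w]; rewrite -sum_w -expect_const1. Qed.

Lemma tail_comb i j r1 r2 w1 w2 :
  tail i j (r1 *: w1 + r2 *: w2) = r1 * tail i j w1 + r2 * tail i j w2.
Proof. by rewrite /tail linearD !linearZ. Qed.

Lemma tail_dirac i j p0 : tail i j (dirac R p0) = (j <= p0 i)%:R.
Proof. by rewrite /tail expect_dirac. Qed.

Lemma tailC i j w :
  tail i j w + expect (fun p : grid d n => (p i < j)%:R : R^o) w = \sum_p w p.
Proof.
rewrite -expect_const1 /tail /expect -big_split; apply: eq_bigr => p _.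
by rewrite ltnNge; case: leqP => _ /=; rewrite ?scaler0 ?addr0 ?add0r.
Qed.

Lemma tail_supp_ge i j w :
  distr w -> (forall p, w p != 0 -> (j <= p i)%N) -> tail i j w = 1.
Proof.
move=> [w_ge0 sum_w] supp_w; rewrite -sum_w -expect_const1.
by apply: (eq_expect_supp (V := R^o)) => p /supp_w ->.
Qed.

Lemma tail_supp_lt i j w : (forall p, w p != 0 -> (p i < j)%N) -> tail i j w = 0.
Proof.
move=> supp_w; rewrite /tail (eq_expect_supp (v2 := fun=> 0)) => [|p /supp_w].
  by rewrite /expect big1 // => p _; rewrite scaler0.
by rewrite ltnNge => /negbTE ->.
Qed.

Lemma supp_lt_tail i j w p :
  (forall q, 0 <= w q) -> tail i j w <= 0 -> w p != 0 -> (p i < j)%N.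
Proof.
move=> w_ge0 tail_le0 /(expect_le0_supp w_ge0 (fun q => ler0n _ _) tail_le0) /eqP.
by rewrite pnatr_eq0 eqb0 ltnNge.
Qed.

Lemma supp_ge_tail i j w p : distr w -> 1 <= tail i j w -> w p != 0 -> (j <= p i)%N.
Proof.
move=> [w_ge0 sum_w] tail_ge1.
have compl_le0 : expect (fun q : grid d n => (q i < j)%:R : R^o) w <= 0 :> R.
  by have := tailC i j w; rewrite sum_w; lra.
move=> /(expect_le0_supp w_ge0 (fun q => ler0n _ _) compl_le0) /eqP.
by rewrite pnatr_eq0 eqb0 -leqNgt.
Qed.

Lemma aa_svertex p i j : (j <= n)%N -> aa (svertex p) i j = aa a i (minn j (p i)).
Proof. by move=> le_jn; rewrite /aa mxE inordK. Qed.

Lemma Zmap_svertex p i j : (j <= n)%N -> Zmap a (svertex p) i j = (j <= p i)%:R.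
Proof.
case: j => [//|j] le_jn; rewrite /Zmap /= !aa_svertex ?(ltnW le_jn) //.
have [le_jp|lt_pj] := leqP j.+1 (p i).
  by rewrite !(minn_idPl _) ?(ltnW le_jp) // divff // subr_eq0 gt_eqF // a_incr.
by rewrite !(minn_idPr _) ?subrr ?mul0r // -ltnS.
Qed.

Lemma Zmap_expect w i j :
  \sum_p w p = 1 -> (j <= n)%N -> Zmap a (expect svertex w) i j = tail i j w.
Proof.
move=> sum_w; case: j => [_|j le_jn]; first by rewrite /Zmap /= -sum_w -expect_const1.
rewrite /Zmap /= /aa !expect_mxE /tail /expect -sumrB mulr_suml; apply: eq_bigr => p _.
by rewrite -mulrBr -mulrA -[X in _ * X]/(Zmap a (svertex p) i j.+1) Zmap_svertex.
Qed.

Lemma brk_lt k : (brk k < n)%N.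
Proof.
case: k => i k; have [_ [tau_l _]] := tau_incr i.
by rewrite /brk /= -tau_l tau_ltn // leqnn andbT; have := ltn_ord k; lia.
Qed.

Lemma SsetP dc P :
  Sset a tau II c dc P <->
  exists w dl, P = hq_point w dl /\ [/\ distr w, tail_bounds w dl & forall k, dc (dl k)].
Proof.
case: P => [[[th w] s] dl] /=; split.
  move=> [/HQ_expect[-> -> w_distr] [[_ Zbounds] dc_dl]].
  exists w, dl; split=> //; split=> // k; have := Zbounds k.
  by rewrite !Zmap_expect ?w_distr.2 ?(brk_lt k) ?(ltnW (brk_lt k)).
move=> [w' [dl' [[-> -> -> ->] [w_distr bounds dc_dl]]]].
have sum_w := w_distr.2; have w_ge0 := w_distr.1.
split; first exact/HQ_expect.
split=> //; split=> [i|k]; last by rewrite !Zmap_expect ?(brk_lt k) ?(ltnW (brk_lt k)).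
rewrite !Zmap_expect ?leqnn //; split; first exact: tail0.
by split=> [j lt_jn|]; [rewrite !Zmap_expect ?tail_antitone // ltnW | exact: tail_ge0].
Qed.

Lemma Sset_hq_point dc w dl :
  Sset (l:=l) a tau II c dc (hq_point w dl) <->
  [/\ distr w, tail_bounds w dl & forall k, dc (dl k)].
Proof.
split=> [/SsetP[w' [dl' [[_ <- _ <-] //]]]|feas].
by apply/SsetP; exists w, dl.
Qed.

Lemma hq_point_comb r1 r2 w1 w2 dl1 dl2 :
  hq_point (r1 *: w1 + r2 *: w2) (r1 *: dl1 + r2 *: dl2) =
  r1 *: hq_point w1 dl1 + r2 *: hq_point w2 dl2.
Proof. by rewrite /hq_point !linearD !linearZ. Qed.

Lemma Srel_hq_point w dl :
  distr w -> tail_bounds w dl -> Sset (l:=l) a tau II c (@rel01 R) (hq_point w dl).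
Proof.
move=> w_distr bounds; apply/Sset_hq_point; split=> // k.
have /andP[lo hi] := bounds k; apply/andP; split.
  exact: le_trans (tail_ge0 _ _ w_distr.1) lo.
exact: le_trans hi (tail_le1 _ _ w_distr).
Qed.

Lemma tail_bounds_comb t w1 w2 dl1 dl2 :
  0 <= t <= 1 -> tail_bounds w1 dl1 -> tail_bounds w2 dl2 ->
  tail_bounds (t *: w1 + (1 - t) *: w2) (t *: dl1 + (1 - t) *: dl2).
Proof.
move=> /andP[t_ge0 t_le1] b1 b2 k; rewrite /tail !linearD !linearZ !ffunE /=.
have /andP[lo1 hi1] := b1 k; have /andP[lo2 hi2] := b2 k.
by apply/andP; split; apply: lerD; apply: ler_wpM2l; rewrite ?subr_ge0.
Qed.

Lemma Srel_convex : cvx_set (Sset (l:=l) a tau II c (@rel01 R)).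
Proof.
move=> P Q t /SsetP[w1 [dl1 [-> [w1_distr b1 _]]]] /SsetP[w2 [dl2 [-> [w2_distr b2 _]]]] t01.
by rewrite -hq_point_comb; apply: Srel_hq_point; [exact: distr_comb | exact: tail_bounds_comb].
Qed.

(** * Extreme points of the relaxation *)

Lemma extreme_tail_endpoint w dl :
  extreme_point (Sset (l:=l) a tau II c (@rel01 R)) (hq_point w dl) ->
  forall k, dl k = tail (tag k) (brk k).+1 w \/ dl k = tail (tag k) (brk k) w.
Proof.
move=> [/Sset_hq_point[w_distr bounds _] ext] k0.
set lo := tail _ _.+1 w; set hi := tail _ _ w.
have le_dl : lo <= dl k0 <= hi := bounds k0; have /andP[lo_le le_hi] := le_dl.
have [->|lo_neq] := eqVneq (dl k0) lo; first by left.
have [->|hi_neq] := eqVneq (dl k0) hi; first by right.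
exfalso; have lt_dl : lo < dl k0 < hi by rewrite !lt_def lo_neq lo_le (eq_sym hi) hi_neq le_hi.
pose dv v : {ffun didx l -> R^o} := [ffun k => if k == k0 then v else dl k].
have dv_bounds v : lo <= v <= hi -> tail_bounds w (dv v).
  by move=> v_itv k; rewrite ffunE; case: eqP => [->|_]; [exact: v_itv | exact: bounds].
set s := relpos lo hi (dl k0); have /andP[s_gt0 s_lt1] := relpos_itv_lt lt_dl.
have dl_split : dl = s *: dv hi + (1 - s) *: dv lo.
  apply/ffunP => k; rewrite !ffunE; case: eqP => [->|_]; last by rewrite convex_combxx.
  by rewrite -[LHS](relposK le_dl) /lerp addrC.
have hi_itv : lo <= hi <= hi by rewrite lexx andbT (le_trans lo_le le_hi).
have lo_itv : lo <= lo <= hi by rewrite lexx (le_trans lo_le le_hi).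
have := ext _ _ s (Srel_hq_point w_distr (dv_bounds hi hi_itv))
  (Srel_hq_point w_distr (dv_bounds lo lo_itv)).
rewrite s_gt0 s_lt1 -hq_point_comb convex_combxx -dl_split.
move=> /(_ isT erefl) [] /ffunP/(_ k0); rewrite !ffunE eqxx => hi_lo.
by have /andP[lo_lt lt_hi] := lt_dl; move: (lt_trans lo_lt lt_hi); rewrite hi_lo ltxx.
Qed.

Lemma extreme_dirac w dl :
  extreme_point (Sset (l:=l) a tau II c (@rel01 R)) (hq_point w dl) ->
  exists p0, w = dirac R p0.
Proof.
move=> [/Sset_hq_point[w_distr bounds _] ext].
have [//|[p0 /andP[w0_gt0 w0_lt1]]] := distr_dirac_or_mixed w_distr; exfalso.
set w0 := w p0; have w0_neq1 : 1 - w0 != 0 by rewrite subr_eq0 eq_sym lt_eqF.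
(* Split off the atom at p0; delta keeps its relative position in each tail interval, and
   the resulting map [fit] is linear in the weights. *)
pose s := [ffun k => relpos (tail (tag k) (brk k).+1 w) (tail (tag k) (brk k) w) (dl k)].
pose fit v : {ffun didx l -> R^o} :=
  [ffun k => lerp (tail (tag k) (brk k).+1 v) (tail (tag k) (brk k) v) (s k)].
have fit_comb r1 r2 v1 v2 : fit (r1 *: v1 + r2 *: v2) = r1 *: fit v1 + r2 *: fit v2.
  by apply/ffunP => k; rewrite !ffunE !tail_comb lerp_comb.
have fit_bounds (v : {ffun grid d n -> R^o}) : (forall p, 0 <= v p) -> tail_bounds v (fit v).
  move=> v_ge0 k; rewrite !ffunE; apply: lerp_itv; first exact: tail_antitone.
  exact: relpos_itv (bounds k).
have fit_w : fit w = dl by apply/ffunP => k; rewrite !ffunE relposK.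
pose rest := (1 - w0)^-1 *: (w - w0 *: dirac R p0).
have w_split : w = w0 *: dirac R p0 + (1 - w0) *: rest.
  by rewrite /rest scalerA mulfV // scale1r addrC subrK.
have rest_distr : distr rest.
  split=> [p|].
    rewrite !ffunE !regular_scaleE mulr_ge0 ?invr_ge0 ?subr_ge0 ?(ltW w0_lt1) //.
    by case: eqP => [->|_]; rewrite ?mulr1 ?subrr ?mulr0 ?subr0 ?w_distr.1.
  rewrite -expect_const1 linearZ linearB linearZ /= expect_dirac !expect_const1 w_distr.2.
  by rewrite !regular_scaleE mulr1 mulVf.
have dirac_distr := distr_dirac R p0.
have := ext _ _ w0 (Srel_hq_point dirac_distr (fit_bounds _ dirac_distr.1))
  (Srel_hq_point rest_distr (fit_bounds _ rest_distr.1)).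
rewrite w0_gt0 w0_lt1 -hq_point_comb -fit_comb -w_split fit_w.
move=> /(_ isT erefl) [] _ /ffunP/(_ p0) + _ _.
by rewrite !ffunE eqxx !regular_scaleE mulr1 subrr mulr0 => /eqP; rewrite oner_eq0.
Qed.

Lemma extreme_delta_binary P :
  extreme_point (Sset (l:=l) a tau II c (@rel01 R)) P -> delta_binary P.
Proof.
move=> ext; have /SsetP[w [dl [P_eq _]]] := ext.1; rewrite {}P_eq in ext *.
have [p0 w_eq] := extreme_dirac ext.
have bin_nat (b : bool) : bin01 (b%:R : R) by case: b; [right|left].
by move=> k /=; have := extreme_tail_endpoint ext k; rewrite w_eq !tail_dirac => -[] ->.
Qed.

(** * The projection onto the union of convex hulls *)

Definition in_box (t : 'I_d -> nat) (p : grid d n) :=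
  forall i, (tau i (t i).-1 <= p i <= tau i (t i))%N.

Lemma tau_le_n i t : (t <= l i)%N -> (tau i t <= n)%N.
Proof. by move=> le_tl; have [_ [<- _]] := tau_incr i; apply: tau_leq; rewrite le_tl leqnn. Qed.

Lemma vertex_box t p :
  (forall i, (0 < t i <= l i)%N) -> in_box t p -> box a tau t (vertex p).
Proof.
move=> t_valid p_box i; have /andP[t_gt0 le_tl] := t_valid i.
have /andP[lo_p p_hi] := p_box i; rewrite mxE -aa_ord.
by rewrite !aa_ler ?lo_p ?p_hi ?tau_le_n // (leq_trans p_hi) ?tau_le_n.
Qed.

Lemma proj_hq_point w dl :
  proj_fth (hq_point w dl) = expect (fun p => (vertex p, theta II c (vertex p))) w.
Proof.
rewrite expect_pair /=; congr (_, _); apply/rowP => i.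
rewrite mxE !expect_mxE; apply: eq_bigr => p _; rewrite !mxE (minn_idPr _) ?aa_ord //.
by rewrite -ltnS.
Qed.

Definition didx_at (i : 'I_d) (k : 'I_(l i).-1) : didx l := Tagged (fun i => 'I_(l i).-1) k.

(* delta_i extended by delta_(i,0) = 1 and delta_(i,l_i) = 0, the values that the tail
   bounds at tau(i,0) = 0 and tau(i,l_i) = n force. *)
Definition delta_ext dl (i : 'I_d) (t : nat) : R :=
  if t is t'.+1 then (if insub t' is Some k then dl (@didx_at i k) else 0) else 1.

Lemma delta_ext_bounds w dl i t :
  distr w -> tail_bounds w dl -> (t <= l i)%N ->
  tail i (tau i t).+1 w <= delta_ext dl i t <= tail i (tau i t) w.
Proof.
move=> w_distr bounds; have [tau0 [taul _]] := tau_incr i.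
case: t => [_|t le_tl] /=; first by rewrite tau0 tail0 // lexx tail_le1.
case: insubP => [k _ val_k|]; first by have := bounds (didx_at k); rewrite /brk /= val_k.
rewrite -leqNgt => le_lt; have -> : t.+1 = l i by lia.
by rewrite taul (tail_ge0 _ _ w_distr.1) andbT tail_supp_lt // => p _; apply: ltn_ord.
Qed.

Lemma Sset_bin_box w dl :
  (0 < n)%N -> Sset (l:=l) a tau II c (@bin01 R) (hq_point w dl) ->
  exists2 t, (forall i, (0 < t i <= l i)%N) & forall p, w p != 0 -> in_box t p.
Proof.
move=> n_gt0 /Sset_hq_point[w_distr bounds dl_bin].
suff /fin_all_exists[t t_box] : forall i, exists t,
    (0 < t <= l i)%N /\ forall p, w p != 0 -> (tau i t.-1 <= p i <= tau i t)%N.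
  by exists t => [i|p w_p i]; [exact: (t_box i).1 | exact: (t_box i).2].
move=> i; have [tau0 [taul _]] := tau_incr i.
have l_gt0 : (0 < l i)%N by rewrite lt0n; apply: contraTneq n_gt0 => l0; rewrite -taul l0 tau0.
have delta_ext_bin t : delta_ext dl i t = 0 \/ delta_ext dl i t = 1.
  by case: t => [|t] /=; [right | case: insubP => [k _ _|_]; [exact: dl_bin | left]].
have nP0 : delta_ext dl i 0 != 0 by rewrite oner_eq0.
have Pl : delta_ext dl i (l i) == 0 by rewrite -(prednK l_gt0) /= insubF // ltnn.
have [t lt_tl /andP[ext_t_neq0 /eqP ext_t1_0]] :=
  nat_ivt (P := fun t => delta_ext dl i t == 0) nP0 Pl.
have ext_t_1 : delta_ext dl i t = 1 by case: (delta_ext_bin t) ext_t_neq0 => ->; rewrite ?eqxx.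
have /andP[_ tail_ge1] := delta_ext_bounds w_distr bounds (ltnW lt_tl).
have /andP[tail_le0 _] := delta_ext_bounds w_distr bounds lt_tl.
rewrite ext_t_1 in tail_ge1; rewrite ext_t1_0 in tail_le0.
exists t.+1; split=> [|p w_p]; first by rewrite lt_tl.
by rewrite (supp_ge_tail w_distr tail_ge1 w_p) -ltnS (supp_lt_tail w_distr.1 tail_le0 w_p).
Qed.

Lemma Sset_bin_target P :
  (0 < n)%N -> Sset (l:=l) a tau II c (@bin01 R) P -> target a l tau II c (proj_fth P).
Proof.
move=> n_gt0 S_P; have /SsetP[w [dl [P_eq _]]] := S_P; rewrite {}P_eq in S_P *.
have [t t_valid supp_w] := Sset_bin_box n_gt0 S_P.
exists t; split=> //; rewrite proj_hq_point; apply: expect_conv_hull.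
  by have /Sset_hq_point[] := S_P.
by move=> p w_p; exists (vertex p); split=> //; apply: vertex_box => //; apply: supp_w.
Qed.

Definition box_delta (t : 'I_d -> nat) : {ffun didx l -> R^o} :=
  [ffun k : didx l => if ((tagged k).+1 < t (tag k))%N then 1 else 0].

Lemma box_tail_bounds w t :
  distr w -> (forall i, (0 < t i <= l i)%N) -> (forall p, w p != 0 -> in_box t p) ->
  tail_bounds w (box_delta t).
Proof.
move=> w_distr t_valid supp_w [i k]; rewrite ffunE /brk /=.
have /andP[t_gt0 le_tl] := t_valid i; have lt_kl : (k.+1 < l i)%N by have := ltn_ord k; lia.
case: ltnP => [lt_kt|le_tk].
  rewrite (tail_supp_ge (j := tau i k.+1) w_distr) ?tail_le1 ?lexx //.
  move=> p /supp_w /(_ i) /andP[le_p _].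
  by apply: leq_trans le_p; apply: tau_leq; lia.
rewrite (tail_supp_lt (j := (tau i k.+1).+1)) ?lexx ?(tail_ge0 _ _ w_distr.1) //.
move=> p /supp_w /(_ i) /andP[_ p_le].
by rewrite ltnS (leq_trans p_le) // tau_leq //; lia.
Qed.

Definition two_point (c1 c2 : nat) (s : R) (j : 'I_n.+1) : R :=
  (1 - s) * (j == c1 :> nat)%:R + s * (j == c2 :> nat)%:R.

Lemma sum_two_point c1 c2 s (F : nat -> R) :
  (c1 <= n)%N -> (c2 <= n)%N ->
  \sum_(j < n.+1) two_point c1 c2 s j * F j = lerp (F c1) (F c2) s.
Proof.
have pick c0 : (c0 <= n)%N -> \sum_(j < n.+1) (j == c0 :> nat)%:R * F j = F c0.
  move=> le_cn; rewrite (eq_bigr (fun j : 'I_n.+1 => if j == c0 :> nat then F j else 0)).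
    by rewrite -big_mkcond big_ord1_eq ltnS le_cn.
  by move=> j _; case: eqP; rewrite ?mul1r ?mul0r.
move=> le_c1 le_c2; under eq_bigr do rewrite mulrDl -!mulrA.
by rewrite big_split -!mulr_sumr !pick.
Qed.

Lemma two_point_ge0 c1 c2 s j : 0 <= s <= 1 -> 0 <= two_point c1 c2 s j.
Proof. by move=> /andP[s_ge0 s_le1]; rewrite addr_ge0 ?mulr_ge0 ?subr_ge0. Qed.

Lemma two_point_supp c1 c2 s j : two_point c1 c2 s j != 0 -> (j == c1 :> nat) || (j == c2 :> nat).
Proof.
rewrite /two_point; apply: contraNT; rewrite negb_or => /andP[/negbTE-> /negbTE->].
by rewrite !mulr0 addr0.
Qed.

Definition prodw (mu : 'I_d -> 'I_n.+1 -> R) : {ffun grid d n -> R^o} :=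
  [ffun p : grid d n => \prod_i mu i (p i)].

Lemma expect_prodw mu (F : 'I_d -> 'I_n.+1 -> R) :
  expect (fun p : grid d n => \prod_i F i (p i) : R^o) (prodw mu) =
  \prod_i \sum_j mu i j * F i j.
Proof.
rewrite bigA_distr_bigA /=; apply: eq_bigr => p _.
by rewrite ffunE regular_scaleE -big_split.
Qed.

Lemma distr_prodw mu :
  (forall i j, 0 <= mu i j) -> (forall i, \sum_j mu i j = 1) -> distr (prodw mu).
Proof.
move=> mu_ge0 sum_mu; split=> [p|]; first by rewrite ffunE prodr_ge0.
by under eq_bigr do rewrite ffunE; rewrite -bigA_distr_bigA big1.
Qed.

Lemma expect_prodw_in mu (I : {set 'I_d}) (F : 'I_d -> 'I_n.+1 -> R) :
  (forall i, \sum_j mu i j = 1) ->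
  expect (fun p : grid d n => \prod_(i in I) F i (p i) : R^o) (prodw mu) =
  \prod_(i in I) \sum_j mu i j * F i j.
Proof.
move=> sum_mu; pose G i j := if i \in I then F i j else 1.
rewrite (_ : expect _ _ = expect (fun p : grid d n => \prod_i G i (p i) : R^o) (prodw mu)).
  rewrite expect_prodw [RHS]big_mkcond; apply: eq_bigr => i _; rewrite /G.
  by case: (i \in I) => //; under eq_bigr do rewrite mulr1; apply: sum_mu.
by apply: eq_bigr => p _; rewrite big_mkcond.
Qed.

Lemma expect_prodw_marginal mu i0 (G : 'I_n.+1 -> R) :
  (forall i, \sum_j mu i j = 1) ->
  expect (fun p : grid d n => G (p i0) : R^o) (prodw mu) = \sum_j mu i0 j * G j.
Proof.
move=> sum_mu; have := expect_prodw_in [set i0] (fun _ j => G j) sum_mu.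
by rewrite big_set1 => <-; apply: eq_bigr => p _; rewrite big_set1.
Qed.

Lemma expect_vertex_prodw mu :
  (forall i, \sum_j mu i j = 1) -> expect vertex (prodw mu) = \row_i \sum_j mu i j * a i j.
Proof.
move=> sum_mu; apply/rowP => i; rewrite expect_mxE mxE -(expect_prodw_marginal i (a i) sum_mu).
by apply: eq_bigr => p _; rewrite mxE.
Qed.

Lemma expect_theta_prodw mu :
  (forall i, \sum_j mu i j = 1) ->
  expect (fun p => theta II c (vertex p)) (prodw mu) = theta II c (\row_i \sum_j mu i j * a i j).
Proof.
move=> sum_mu; apply/rowP => k; rewrite expect_theta_vertex mxE; apply: eq_bigr => I _.
congr (_ * _); under [RHS]eq_bigr do rewrite mxE.
by rewrite -expect_prodw_in //; apply: eq_bigr => p _; rewrite mulrC.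
Qed.

Definition interp_weights (c1 c2 : 'I_d -> nat) (g : 'rV[R]_d) i : 'I_n.+1 -> R :=
  two_point (c1 i) (c2 i) (relpos (aa a i (c1 i)) (aa a i (c2 i)) (g 0 i)).

Lemma interp_weights_spec c1 c2 (g : 'rV[R]_d) :
  (forall i, (c1 i <= n)%N /\ (c2 i <= n)%N) ->
  (forall i, aa a i (c1 i) <= g 0 i <= aa a i (c2 i)) ->
  [/\ forall i j, 0 <= interp_weights c1 c2 g i j, forall i, \sum_j interp_weights c1 c2 g i j = 1
    & \row_i \sum_j interp_weights c1 c2 g i j * a i j = g].
Proof.
move=> c_n g_seg; rewrite /interp_weights; split=> [i j|i|].
- exact/two_point_ge0/relpos_itv/g_seg.
- have [c1_n c2_n] := c_n i; under eq_bigr do rewrite -[two_point _ _ _ _]mulr1.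
  by rewrite (sum_two_point _ (fun=> 1)) // /lerp !mulr1 subrK.
- apply/rowP => i; have [c1_n c2_n] := c_n i; rewrite mxE.
  under eq_bigr do rewrite -aa_ord; rewrite sum_two_point //; exact/relposK/g_seg.
Qed.

Lemma interp_weights_supp c1 c2 (g : 'rV[R]_d) (p : grid d n) i :
  prodw (interp_weights c1 c2 g) p != 0 -> (p i == c1 i :> nat) || (p i == c2 i :> nat).
Proof. by rewrite ffunE => /prodf_neq0/(_ i isT)/two_point_supp. Qed.

Lemma interp_weights_box c1 c2 (g : 'rV[R]_d) t p :
  (forall i, (tau i (t i).-1 <= c1 i <= c2 i)%N && (c2 i <= tau i (t i))%N) ->
  prodw (interp_weights c1 c2 g) p != 0 -> in_box t p.
Proof.
move=> c_box w_p i; have /andP[/andP[lo_c1 le_c12] c2_hi] := c_box i.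
by case/orP: (interp_weights_supp i w_p) => /eqP->;
  rewrite ?lo_c1 ?c2_hi ?(leq_trans le_c12 c2_hi) ?(leq_trans lo_c1 le_c12).
Qed.

Lemma target_Sset_bin y :
  target a l tau II c y -> exists P, Sset (l:=l) a tau II c (@bin01 R) P /\ proj_fth P = y.
Proof.
move=> [t [t_valid [k [lam [pts [lam_ge0 [sum_lam [pts_box ->]]]]]]]].
have [g g_spec] := fin_all_exists pts_box.
pose c1 i := tau i (t i).-1; pose c2 i := tau i (t i).
have c_n i : (c1 i <= n)%N /\ (c2 i <= n)%N.
  by have /andP[_ le_tl] := t_valid i; rewrite !tau_le_n // (leq_trans (leq_pred _)).
have mu_spec j := interp_weights_spec c_n (g_spec j).1.
pose w := \sum_j lam j *: prodw (interp_weights c1 c2 (g j)).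
have w_distr : distr w.
  by apply: distr_mix => // j; have [mu_ge0 sum_mu _] := mu_spec j; apply: distr_prodw.
have supp_w p : w p != 0 -> in_box t p.
  move=> /mix_supp[j]; apply: interp_weights_box => i; have /andP[_ le_tl] := t_valid i.
  by rewrite /c1 /c2 !leqnn tau_leq // leq_pred.
exists (hq_point w (box_delta t)); split.
  apply/Sset_hq_point; split=> // [|kk]; first exact: box_tail_bounds.
  by rewrite ffunE /bin01; case: ifP; [right|left].
rewrite proj_hq_point linear_sum; apply: eq_bigr => j _.
rewrite linearZZ /= (g_spec j).2 expect_pair /=.
by have [_ sum_mu mean_mu] := mu_spec j; rewrite expect_vertex_prodw ?expect_theta_prodw ?mean_mu.
Qed.

(** * The MICP relaxation of the graph *)

Lemma breakpoint_bracket i v :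
  (0 < n)%N -> aa a i 0 <= v <= aa a i n ->
  exists2 k, (k < n)%N & aa a i k <= v <= aa a i k.+1.
Proof.
move=> n_gt0 /andP[a0_v v_an].
have Pn : (n != 0)%N && (v <= aa a i n) by rewrite -lt0n n_gt0.
have [k lt_kn /andP[]] := nat_ivt (P := fun k => (k != 0)%N && (v <= aa a i k)) isT Pn.
rewrite negb_and negbK -ltNge => k_lo /andP[_ v_hi]; exists k => //; rewrite v_hi andbT.
by case/orP: k_lo => [/eqP-> //|/ltW].
Qed.

Lemma tau_bracket i k :
  (k < n)%N -> exists2 t, (0 < t <= l i)%N & (tau i t.-1 <= k < tau i t)%N.
Proof.
move=> lt_kn; have [tau0 [taul _]] := tau_incr i.
have nP0 : ~~ (k < tau i 0)%N by rewrite tau0.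
have Pl : (k < tau i (l i))%N by rewrite taul.
have [t lt_tl /andP[]] := nat_ivt (P := fun t => (k < tau i t)%N) nP0 Pl.
by rewrite -leqNgt => tau_t tau_t1; exists t.+1; rewrite ?lt_tl ?tau_t.
Qed.

Lemma svertex_interp_ge_min (k : 'I_d -> nat) (g : 'rV[R]_d) i (j : 'I_n.+1) :
  (forall i, (k i < n)%N) -> (forall i, aa a i (k i) <= g 0 i <= aa a i (k i).+1) ->
  Num.min (g 0 i) (a i j) <=
    expect svertex (prodw (interp_weights k (fun i => (k i).+1) g)) i j.
Proof.
move=> k_lt g_k; have k_n i' : (k i' <= n)%N /\ ((k i').+1 <= n)%N by rewrite ltnW.
have [_ sum_mu _] := interp_weights_spec k_n g_k; set w := prodw _.
rewrite expect_mxE (_ : \sum_p _ = expect (fun p : grid d n => aa a i (minn j (p i)) : R^o) w).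
  have [c1_n c2_n] := k_n i.
  rewrite (expect_prodw_marginal i (fun x : 'I_n.+1 => aa a i (minn j x))) //.
  rewrite /interp_weights (sum_two_point _ (fun x => aa a i (minn j x))) //.
  have [le_jk|lt_kj] := leqP j (k i).
    rewrite !(minn_idPl _) ?(leq_trans le_jk) // /lerp -mulrDl subrK mul1r aa_ord.
    by rewrite ge_min lexx orbT.
  by rewrite !(minn_idPr _) ?(ltnW lt_kj) // relposK ?g_k // ge_min lexx.
by apply: eq_bigr => p _; rewrite mxE.
Qed.

Lemma graph_point (g : 'rV[R]_d) :
  (0 < n)%N -> (forall i, aa a i 0 <= g 0 i <= aa a i n) ->
  exists w t, [/\ Sset (l:=l) a tau II c (@bin01 R) (hq_point w (box_delta t)),
    proj_fth (hq_point w (box_delta t)) = (g, theta II c g) &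
    forall i (j : 'I_n.+1), Num.min (g 0 i) (a i j) <= expect svertex w i j].
Proof.
move=> n_gt0 g_range.
have /fin_all_exists[kt kt_spec] : forall i, exists kt : nat * nat,
    [/\ (kt.1 < n)%N, aa a i kt.1 <= g 0 i <= aa a i kt.1.+1,
        (0 < kt.2 <= l i)%N & (tau i kt.2.-1 <= kt.1 < tau i kt.2)%N].
  move=> i; have [k lt_kn g_k] := breakpoint_bracket n_gt0 (g_range i).
  by have [t t_valid tau_t] := tau_bracket i lt_kn; exists (k, t).
pose k i := (kt i).1; pose t i := (kt i).2.
have k_lt i : (k i < n)%N by have [] := kt_spec i.
have g_k i : aa a i (k i) <= g 0 i <= aa a i (k i).+1 by have [] := kt_spec i.
have k_n i : (k i <= n)%N /\ ((k i).+1 <= n)%N by rewrite ltnW.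
have [mu_ge0 sum_mu mean_mu] := interp_weights_spec k_n g_k.
exists (prodw (interp_weights k (fun i => (k i).+1) g)), t; split.
- apply/Sset_hq_point; split=> [||kk]; first exact: distr_prodw.
    apply: box_tail_bounds => [|i|p]; [exact: distr_prodw | by have [] := kt_spec i |].
    apply: interp_weights_box => i; have [_ _ _ /andP[tau_k k_tau]] := kt_spec i.
    by rewrite tau_k leqnSn.
  by rewrite ffunE /bin01; case: ifP; [right|left].
- by rewrite proj_hq_point expect_pair /= expect_vertex_prodw // expect_theta_prodw // mean_mu.
- by move=> i j; apply: svertex_interp_ge_min.
Qed.

Lemma Mset_graph m (X : 'rV[R]_m -> Prop) (f : 'rV[R]_m -> 'rV[R]_d)
    (u : 'rV[R]_m -> 'M[R]_(d, n.+1)) (W : 'rV[R]_m * 'rV[R]_d -> Prop) x :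
  (0 < n)%N -> X x -> (forall i, a i ord0 <= f x 0 i <= a i ord_max) ->
  (forall i j, u x i j <= Num.min (f x 0 i) (a i j)) -> W (x, f x) ->
  exists q, Mset (l:=l) a tau II c X u W (@bin01 R) q /\ proj_xth q = (x, theta II c (f x)).
Proof.
move=> n_gt0 Xx f_range u_le Wx.
have f_range' i : aa a i 0 <= f x 0 i <= aa a i n.
  by rewrite -[0%N]/(nat_of_ord (@ord0 n)) -[n]/(nat_of_ord (@ord_max n)) !aa_ord.
have [w [t [S_P proj_P s_ge]]] := graph_point n_gt0 f_range'.
case: proj_P => last_s theta_w.
exists (x, hq_point w (box_delta t)); split; last by rewrite /proj_xth /= theta_w.
by split=> //; split=> //; split=> [i j|]; [apply: le_trans (s_ge i j) | rewrite /= last_s].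
Qed.

Lemma Mrel_convex m (X : 'rV[R]_m -> Prop) (u : 'rV[R]_m -> 'M[R]_(d, n.+1))
    (W : 'rV[R]_m * 'rV[R]_d -> Prop) :
  cvx_set X -> (forall i j, convex_fun_on X (fun x => u x i j)) -> cvx_set W ->
  cvx_set (Mset (l:=l) a tau II c X u W (@rel01 R)).
Proof.
move=> X_cvx u_cvx W_cvx [x1 P1] [x2 P2] t [X1 [S1 [u1 W1]]] [X2 [S2 [u2 W2]]] t01.
have /andP[t_ge0 t_le1] := t01.
split; first exact: X_cvx.
split; first exact: Srel_convex.
split=> [i j|].
  rewrite /= !mxE; apply: le_trans (u_cvx i j _ _ t X1 X2 t01) _.
  by rewrite lerD // ler_wpM2l ?subr_ge0.
have -> : lastcol (t *: P1 + (1 - t) *: P2).1.2 = t *: lastcol P1.1.2 + (1 - t) *: lastcol P2.1.2.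
  by apply/rowP => i; rewrite !mxE.
exact: (W_cvx (x1, lastcol P1.1.2) (x2, lastcol P2.1.2) t W1 W2 t01).
Qed.

End Formulation.

Lemma le_min_from_ends (R : realDomainType) n (v b : 'I_n.+1 -> R) (y : R) :
  b ord0 <= y <= b ord_max -> v ord0 = b ord0 -> v ord_max = y ->
  (forall j : 'I_n.+1, (0 < j < n)%N -> v j <= Num.min y (b j)) ->
  forall j, v j <= Num.min y (b j).
Proof.
move=> /andP[b0_y y_bn] v0 vn v_mid j; case: (ltnP 0 j) => [j_gt0|]; last first.
  rewrite leqn0 => /eqP j0; have -> : j = ord0 by apply: val_inj.
  by rewrite v0 le_min b0_y lexx.
case: (ltnP j n) => [lt_jn|le_nj]; first by apply: v_mid; rewrite j_gt0.
have -> : j = ord_max by apply/val_inj/eqP; rewrite eqn_leq le_nj andbT -ltnS ltn_ord.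
by rewrite vn le_min lexx.
Qed.

Theorem corollary7p4 (R : realType) (m d n kap : nat)
    (a : 'M[R]_(d, n.+1)) (l : 'I_d -> nat) (tau : 'I_d -> nat -> nat)
    (II : 'I_kap -> {set {set 'I_d}}) (c : 'I_kap -> {set 'I_d} -> R)
    (X : 'rV[R]_m -> Prop) (f : 'rV[R]_m -> 'rV[R]_d)
    (u : 'rV[R]_m -> 'M[R]_(d, n.+1)) (W : 'rV[R]_m * 'rV[R]_d -> Prop) :
  (0 < d)%N -> (0 < n)%N -> (0 < kap)%N ->
  (* a_{i0} < ... < a_{in} *)
  (forall i j, (j < n)%N -> aa a i j < aa a i j.+1) ->
  (* 0 = tau(i,0) < ... < tau(i,l_i) = n *)
  (forall i, tau i 0%N = 0%N /\ tau i (l i) = n /\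
             forall t, (t < l i)%N -> (tau i t < tau i t.+1)%N) ->
  (* a_{i0} <= f_i(x) <= a_{in} on X *)
  (forall x, X x -> forall i, a i ord0 <= f x 0 i <= a i ord_max) ->
  (* u convex on the convex set X *)
  cvx_set X -> (forall i j, convex_fun_on X (fun x => u x i j)) ->
  (forall x, X x -> forall i,
     u x i ord0 = a i ord0 /\ u x i ord_max = f x 0 i /\
     forall j : 'I_n.+1, (0 < j < n)%N -> u x i j <= Num.min (f x 0 i) (a i j)) ->
  (* W convex, containing the graph of f over X *)
  cvx_set W -> (forall x, X x -> W (x, f x)) ->
  ideal_formulation
    (Sset (l:=l) a tau II c (@bin01 R)) (Sset (l:=l) a tau II c (@rel01 R))
    (@proj_fth R d n kap l) (target a l tau II c) (@delta_binary R d n kap l)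
  /\
  micp_relaxation
    (Mset (l:=l) a tau II c X u W (@bin01 R)) (Mset (l:=l) a tau II c X u W (@rel01 R))
    (@proj_xth R m d n kap l) (graph_thf II c X f).
Proof.
move=> _ n_gt0 _ a_incr tau_incr f_range X_cvx u_cvx u_spec W_cvx W_graph.
split; split.
- move=> y; split=> [[P [S_P <-]]|y_target].
    exact (Sset_bin_target a_incr tau_incr n_gt0 S_P).
  exact (target_Sset_bin a_incr tau_incr y_target).
- exact (extreme_delta_binary a_incr tau_incr).
- move=> [x th] [/= Xx ->].
  apply: (Mset_graph II c a_incr tau_incr n_gt0 Xx (f_range x Xx) _ (W_graph x Xx)) => i j.
  have [u0 [un u_mid]] := u_spec x Xx i.
  exact: le_min_from_ends (f_range x Xx i) u0 un u_mid j.
- exact (Mrel_convex a_incr tau_incr X_cvx u_cvx W_cvx).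
Qed.
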